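(* For all real numbers $w,z$ there exists an infinitely differentiable strictly increasing bijection $t:\mathbb{R}\to\mathbb{R}$ such that $t(w)=z$ and $t(x)\sim_F^* x$ for every $x<w$.
   Context: Let $h:\mathbb{R}\to\mathbb{R}$ be $h(x)=0$ for $x\le 0$ and $h(x)=e^{-1/x}$ for $x>0$, and let $s:[0,1]\to[0,1]$ be $s(x)=\frac{h(x)}{h(x)+h(1-x)}$. For points $A=(p_1,q_1)$, $B=(p_2,q_2)$ in $\mathbb{R}^2$ with $p_1<p_2$ and $q_1<q_2$, define $s_{AB}:[p_1,p_2]\to[q_1,q_2]$ by $s_{AB}(x)=(q_2-q_1)\, s\!\left(\frac{x-p_1}{p_2-p_1}\right)+q_1$. A rational pair is a point of $\mathbb{R}^2$ with both coordinates rational. Let $F=\{s_{AB}: A,B \text{ rational pairs}, A=(p_1,q_1), B=(p_2,q_2), p_1<p_2, q_1<q_2\}$. For $x,y\in\mathbb{R}$, write $x\sim_F y$ if there is $g\in F$ with $g(x)=y$ or $g^{-1}(x)=y$. Write $x\sim_F^* y$ if there is a finite sequence $x=x_1\sim_F x_2\sim_F\cdots\sim_F x_n=y$ with $n\ge 1$. *)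

From Stdlib Require Import Reals Lra ZArith.
Open Scope R_scope.

Definition h (x : R) : R :=
  if Rle_dec x 0 then 0 else exp (- (1 / x)).

Definition s (x : R) : R := h x / (h x + h (1 - x)).

(* s_AB for A = (p1,q1), B = (p2,q2), intended on [p1,p2] *)
Definition sAB (p1 q1 p2 q2 : R) (x : R) : R :=
  (q2 - q1) * s ((x - p1) / (p2 - p1)) + q1.

Definition is_rational (r : R) : Prop :=
  exists (a b : Z), b <> 0%Z /\ r = IZR a / IZR b.

(* x ~_F y : there are rational pairs A=(p1,q1), B=(p2,q2) with p1<p2, q1<q2
   such that g = s_AB : [p1,p2] -> [q1,q2] satisfies g(x) = y or g^{-1}(x) = y. *)
Definition simF (x y : R) : Prop :=
  exists p1 q1 p2 q2 : R,
    is_rational p1 /\ is_rational q1 /\ is_rational p2 /\ is_rational q2 /\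
    p1 < p2 /\ q1 < q2 /\
    ( (p1 <= x <= p2 /\ sAB p1 q1 p2 q2 x = y)
    \/ (p1 <= y <= p2 /\ sAB p1 q1 p2 q2 y = x) ).

Inductive simF_star : R -> R -> Prop :=
  | simF_star_refl : forall x, simF_star x x
  | simF_star_step : forall x y z, simF x y -> simF_star y z -> simF_star x z.

Definition smooth (f : R -> R) : Prop :=
  exists D : nat -> R -> R,
    D 0%nat = f /\ forall (n : nat) (x : R), derivable_pt_lim (D n) x (D (S n) x).

(* Take rational points [a_k] ([k] in [Z]) increasing to [w] with gaps of order [4^-k], and
   rational points [b_k] increasing to [z] with the much smaller gaps [4^-(k^2)].  Left of [w],
   let [t] be the spline whose pieces are the maps [s_AB] from [[a_k, a_(k+1)]] onto
   [[b_k, b_(k+1)]]; right of [w], let [t x = z + (x - w) h (x - w)].  Since [s] is flat at [0]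
   and [1], consecutive pieces join smoothly, and every [x < w] is sent to [t x] by a single
   [s_AB] with rational endpoints.  Near [w] the [(p+1)]-st derivative of the [k]-th piece has
   size about [4^-(k^2) 4^((p+1)k)], which is [o(4^-k) = o(w - x)]; so all derivatives of [t]
   tend to [0] from the left, in agreement with the flat right branch, and [t] is smooth at [w]. *)

From Stdlib Require Import Reals Lra Lia ZArith ClassicalEpsilon.
From Coquelicot Require Import Coquelicot.
Open Scope R_scope.

(** * Smooth functions *)

Lemma locally_lt (P : R -> Prop) c x : x < c -> (forall y, y < c -> P y) -> locally x P.
Proof.
  intros Hx HP; apply locally_interval with m_infty c; [exact I | exact Hx | intros y _ Hy; apply HP, Hy].
Qed.

Lemma locally_gt (P : R -> Prop) c x : c < x -> (forall y, c < y -> P y) -> locally x P.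
Proof.
  intros Hx HP; apply locally_interval with c p_infty; [exact Hx | exact I | intros y Hy _; apply HP, Hy].
Qed.

Fixpoint Cn (n : nat) (f : R -> R) : Prop :=
  match n with
  | O => True
  | S m => (forall x, ex_derive f x) /\ Cn m (Derive f)
  end.

Definition Cinf (f : R -> R) : Prop := forall n, Cn n f.

Lemma Cn_ext n f g : (forall x, f x = g x) -> Cn n f -> Cn n g.
Proof.
  revert f g; induction n as [|n IH]; simpl; intros f g Efg Hf; auto.
  destruct Hf as [Df Hf]; split.
  - intro x; apply ex_derive_ext with f; auto.
  - apply IH with (Derive f); auto; intro x; apply Derive_ext; auto.
Qed.

Lemma Cn_S_weaken n f : Cn (S n) f -> Cn n f.
Proof.
  revert f; induction n as [|n IH]; intros f [Df Hf]; [exact I | split; auto].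
Qed.

Lemma Cn_const n c : Cn n (fun _ => c).
Proof.
  revert c; induction n as [|n IH]; simpl; intro c; auto; split.
  - intro; apply ex_derive_const.
  - apply Cn_ext with (fun _ => 0); auto; intro x; now rewrite Derive_const.
Qed.

Lemma Cn_plus n f g : Cn n f -> Cn n g -> Cn n (fun x => f x + g x).
Proof.
  revert f g; induction n as [|n IH]; [now simpl|]; intros f g [Df Hf] [Dg Hg]; split.
  - intro x; exact (ex_derive_plus f g x (Df x) (Dg x)).
  - apply Cn_ext with (fun x => Derive f x + Derive g x); auto.
    intro x; rewrite Derive_plus; auto.
Qed.

Lemma Cn_mult n f g : Cn n f -> Cn n g -> Cn n (fun x => f x * g x).
Proof.
  revert f g; induction n as [|n IH]; simpl; intros f g Hf Hg; auto.
  pose proof (Cn_S_weaken _ _ Hf) as Hf'; pose proof (Cn_S_weaken _ _ Hg) as Hg'.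
  destruct Hf as [Df Hf], Hg as [Dg Hg]; split.
  - intro x; apply ex_derive_mult; auto.
  - apply Cn_ext with (fun x => Derive f x * g x + f x * Derive g x).
    + intro x; rewrite Derive_mult; auto.
    + apply Cn_plus; apply IH; auto.
Qed.

Lemma Cn_inv n f : (forall x, f x <> 0) -> Cn n f -> Cn n (fun x => / f x).
Proof.
  revert f; induction n as [|n IH]; simpl; intros f Hnz Hf; auto.
  pose proof (Cn_S_weaken _ _ Hf) as Hf'; destruct Hf as [Df Hf]; split.
  - intro x; apply ex_derive_inv; auto.
  - apply Cn_ext with (fun x => (-1 * Derive f x) * (/ f x * / f x)).
    + intro x; rewrite Derive_inv; auto; field; auto.
    + apply Cn_mult; [apply Cn_mult, Hf; apply Cn_const | apply Cn_mult; apply IH; auto].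
Qed.

Lemma Cn_comp_affine n f a b : Cn n f -> Cn n (fun x => f (a * x + b)).
Proof.
  revert f; induction n as [|n IH]; [now simpl|]; intros f [Df Hf].
  assert (Daff : forall x, is_derive (fun x => a * x + b) x a)
    by (intro x; auto_derive; auto; ring).
  split.
  - intro x; apply ex_derive_comp; auto; eexists; apply Daff.
  - apply Cn_ext with (fun x => a * Derive f (a * x + b)).
    + intro x; rewrite (Derive_comp f (fun x => a * x + b)); [| auto | eexists; apply Daff].
      replace (Derive _ x) with a by (symmetry; apply is_derive_unique, Daff); ring.
    + apply Cn_mult; [apply Cn_const | apply IH; auto].
Qed.

Lemma Cinf_ext f g : (forall x, f x = g x) -> Cinf f -> Cinf g.
Proof. intros E Hf n; apply Cn_ext with f; auto. Qed.
Lemma Cinf_const c : Cinf (fun _ => c).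
Proof. intro n; apply Cn_const. Qed.
Lemma Cinf_plus f g : Cinf f -> Cinf g -> Cinf (fun x => f x + g x).
Proof. intros Hf Hg n; apply Cn_plus; auto. Qed.
Lemma Cinf_mult f g : Cinf f -> Cinf g -> Cinf (fun x => f x * g x).
Proof. intros Hf Hg n; apply Cn_mult; auto. Qed.
Lemma Cinf_inv f : (forall x, f x <> 0) -> Cinf f -> Cinf (fun x => / f x).
Proof. intros Hnz Hf n; apply Cn_inv; auto. Qed.
Lemma Cinf_comp_affine f a b : Cinf f -> Cinf (fun x => f (a * x + b)).
Proof. intros Hf n; apply Cn_comp_affine; auto. Qed.
Lemma Cinf_id : Cinf (fun x => x).
Proof.
  intros [|n]; [exact I | split].
  - intro; apply ex_derive_id.
  - apply Cn_ext with (fun _ => 1); [intro x; now rewrite Derive_id | apply Cn_const].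
Qed.

Lemma Cn_ex_derive_n n f : Cn (S n) f -> forall x, ex_derive (Derive_n f n) x.
Proof.
  revert f; induction n as [|n IH]; intros f Hf x; [apply Hf|].
  apply ex_derive_ext with (Derive_n (Derive f) n); [|apply IH, Hf].
  intro y; rewrite <- Nat.add_1_r; apply (Derive_n_comp f n 1).
Qed.

Lemma Cinf_ex_derive_n f : Cinf f -> forall n x, ex_derive_n f n x.
Proof. intros Hf [|n] x; [exact I | apply Cn_ex_derive_n, Hf]. Qed.

Lemma Cinf_is_derive_n f : Cinf f -> forall n x, is_derive (Derive_n f n) x (Derive_n f (S n) x).
Proof. intros Hf n x; apply Derive_correct, Cn_ex_derive_n, Hf. Qed.

Lemma Cinf_continuity_pt f : Cinf f -> forall n x, continuity_pt (Derive_n f n) x.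
Proof.
  intros Hf n x; apply derivable_continuous_pt.
  exists (Derive_n f (S n) x); apply is_derive_Reals, Cinf_is_derive_n, Hf.
Qed.

Lemma Derive_n_comp_affine f c a b d n x : Cinf f ->
  Derive_n (fun y => c * f (a * y + b) + d) (S n) x = c * a ^ S n * Derive_n f (S n) (a * x + b).
Proof.
  intro Hf.
  assert (Hfb : Cinf (fun u => f (1 * u + b))) by now apply Cinf_comp_affine.
  assert (Hloc : forall g y, Cinf g ->
            locally y (fun u => forall k, (k <= S n)%nat -> ex_derive_n g k u))
    by (intros g y Hg; apply filter_forall; intros u k _; apply Cinf_ex_derive_n, Hg).
  rewrite Derive_n_plus; [| apply Hloc, Cinf_mult, Cinf_comp_affine, Hf; apply Cinf_const
                          | apply Hloc, Cinf_const].
  rewrite Derive_n_const, Rplus_0_r, Derive_n_scal_l.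
  rewrite (Derive_n_ext (fun y => f (a * y + b)) (fun y => f (1 * (a * y) + b)))
    by (intro; now rewrite Rmult_1_l).
  rewrite (Derive_n_comp_scal (fun u => f (1 * u + b))) by now apply Hloc.
  rewrite (Derive_n_ext (fun u => f (1 * u + b)) (fun u => f (u + b)))
    by (intro; now rewrite Rmult_1_l).
  rewrite Derive_n_comp_trans; ring.
Qed.

Lemma Cinf_locally_is_derive_n f g x : Cinf g -> locally x (fun y => f y = g y) ->
  forall n, is_derive (Derive_n f n) x (Derive_n f (S n) x).
Proof.
  intros Hg Hfg n.
  assert (Hn : forall m, locally x (fun y => Derive_n g m y = Derive_n f m y)).
  { intro m; apply locally_locally in Hfg; revert Hfg; apply filter_imp.
    intros y Hy; symmetry; apply Derive_n_ext_loc, Hy. }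
  rewrite <- (Derive_n_ext_loc g f (S n) x) by (apply Hn with (m := 0%nat)).
  apply is_derive_ext_loc with (Derive_n g n); [apply Hn|].
  apply Cinf_is_derive_n, Hg.
Qed.

Lemma Derive_n_plus_Cinf f g n x : Cinf f -> Cinf g ->
  Derive_n (fun y => f y + g y) n x = Derive_n f n x + Derive_n g n x.
Proof.
  intros Hf Hg; apply Derive_n_plus; apply filter_forall; intros y k _; apply Cinf_ex_derive_n; auto.
Qed.

Lemma continuity_pt_left_zero g c : continuity_pt g c -> (forall u, u < c -> g u = 0) -> g c = 0.
Proof.
  intros Hc Hg; destruct (Req_dec (g c) 0) as [|Hn]; auto; exfalso.
  destruct (Hc (Rabs (g c)) (Rabs_pos_lt _ Hn)) as [d [Hd Hdd]].
  specialize (Hdd (c - d / 2)); simpl in Hdd; unfold R_dist in Hdd.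
  rewrite Hg, Rminus_0_l, Rabs_Ropp in Hdd by lra.
  enough (Rabs (g c) < Rabs (g c)) by lra.
  apply Hdd; split; [split; [exact I | lra]|].
  replace (c - d / 2 - c) with (- (d / 2)) by ring; rewrite Rabs_Ropp, Rabs_right; lra.
Qed.

Lemma Cinf_const_left_derive_n Q c w : Cinf Q -> (forall u, u <= w -> Q u = c) ->
  forall p, Derive_n Q (S p) w = 0.
Proof.
  intros HQ Hc p; apply continuity_pt_left_zero; [apply Cinf_continuity_pt, HQ|].
  intros u Hu; rewrite (Derive_n_ext_loc _ (fun _ => c)); [apply Derive_n_const|].
  apply locally_lt with w; auto; intros y Hy; apply Hc; lra.
Qed.

Lemma Derive_n_glue f Q w : Cinf Q -> (forall x, w <= x -> f x = Q x) ->
  (forall p, Derive_n Q (S p) w = 0) ->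
  (forall p eps, 0 < eps -> exists d, 0 < d /\
     forall y, w - d < y < w -> Rabs (Derive_n f p y - Derive_n Q p w) <= eps * (w - y)) ->
  forall p, Derive_n f p w = Derive_n Q p w /\ is_derive (Derive_n f p) w 0.
Proof.
  intros HQ Hright Hflat Hleft.
  assert (Hloc : forall x p, w < x -> Derive_n f p x = Derive_n Q p x).
  { intros x p Hx; apply Derive_n_ext_loc.
    apply locally_gt with w; auto; intros y Hy; apply Hright; lra. }
  assert (Hstep : forall p, Derive_n f p w = Derive_n Q p w -> is_derive (Derive_n f p) w 0).
  { intros p Hv; apply is_derive_Reals; intros eps Heps.
    assert (HQd : derivable_pt_lim (Derive_n Q p) w 0).
    { apply is_derive_Reals; rewrite <- (Hflat p); apply Cinf_is_derive_n, HQ. }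
    destruct (HQd eps Heps) as [d1 Hd1].
    destruct (Hleft p (eps / 2) ltac:(lra)) as [d2 [Hd2 Hl]].
    assert (Hd : 0 < Rmin d1 d2) by (apply Rmin_pos; [apply cond_pos | auto]).
    exists (mkposreal _ Hd); intros e He0 He; simpl in He.
    pose proof (Rmin_l d1 d2); pose proof (Rmin_r d1 d2).
    destruct (Rle_dec e 0).
    - rewrite Rabs_left in He by lra; specialize (Hl (w + e) ltac:(lra)).
      rewrite Hv, Rminus_0_r; unfold Rdiv; rewrite Rabs_mult, Rabs_inv, (Rabs_left e) by lra.
      apply Rle_lt_trans with (eps / 2 * (w - (w + e)) * / - e).
      + apply Rmult_le_compat_r; [apply Rlt_le, Rinv_0_lt_compat; lra | auto].
      + replace (eps / 2 * (w - (w + e)) * / - e) with (eps / 2) by (field; lra); lra.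
    - rewrite Hv, Hloc by lra; apply Hd1; auto; apply Rlt_le_trans with (Rmin d1 d2); auto. }
  induction p as [|p [_ IH]].
  - assert (Hv : Derive_n f 0 w = Derive_n Q 0 w) by (apply Hright; lra); auto.
  - assert (Hv : Derive_n f (S p) w = Derive_n Q (S p) w)
      by (rewrite Hflat; apply is_derive_unique, IH); auto.
Qed.

(** * The functions [h], [s] and [s_AB] *)

Lemma h_le0 x : x <= 0 -> h x = 0.
Proof. intro Hx; unfold h; destruct (Rle_dec x 0); [auto | contradiction]. Qed.

Lemma h_gt0_eq x : 0 < x -> h x = exp (- (1 / x)).
Proof. intro Hx; unfold h; destruct (Rle_dec x 0); [lra | auto]. Qed.

Lemma exp_ge_pow_div_fact u n : 0 <= u -> u ^ S n / INR (fact (S n)) <= exp u.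
Proof.
  intro Hu; eapply Rle_trans; [| apply (exp_ge_taylor u (S n) Hu)]; rewrite tech5.
  enough (0 <= sum_f_R0 (fun k => u ^ k / INR (fact k)) n) by lra.
  apply cond_pos_sum; intro k; apply Rmult_le_pos; [apply pow_le; auto|].
  apply Rlt_le, Rinv_0_lt_compat, INR_fact_lt_0.
Qed.

(* This is what makes [h] flat at [0]. *)
Lemma inv_pow_mul_exp_le k x : 0 < x -> (/ x) ^ k * exp (- (1 / x)) <= INR (fact (S k)) * x.
Proof.
  intro Hx; set (u := / x).
  assert (Hu : 0 < u) by (apply Rinv_0_lt_compat; auto).
  pose proof (INR_fact_lt_0 (S k)) as HF.
  pose proof (exp_ge_pow_div_fact u k (Rlt_le _ _ Hu)) as He.
  replace (- (1 / x)) with (- u) by (unfold u; field; lra); rewrite exp_Ropp.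
  assert (Hp : 0 < u ^ S k / INR (fact (S k))) by (apply Rdiv_lt_0_compat; auto; apply pow_lt; auto).
  apply Rle_trans with (u ^ k * / (u ^ S k / INR (fact (S k)))).
  - apply Rmult_le_compat_l; [apply pow_le; lra | apply Rinv_le_contravar; auto].
  - replace x with (/ u) by (unfold u; field; lra); apply Req_le.
    rewrite <- tech_pow_Rmult; field; repeat split; try lra; apply pow_nonzero; lra.
Qed.

Definition h_div_pow (k : nat) (x : R) : R := (/ x) ^ k * h x.

Lemma is_derive_inv_pow k x : x <> 0 -> is_derive (fun y => (/ y) ^ k) x (- INR k * (/ x) ^ S k).
Proof.
  intro Hx; induction k as [|k IH].
  - simpl; replace (- 0 * (/ x * 1)) with 0 by ring; apply (is_derive_const 1 x).
  - apply is_derive_ext with (fun y => / y * (/ y) ^ k); [intro; simpl; ring|].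
    replace (- INR (S k) * (/ x) ^ S (S k))
      with (- (/ x) ^ 2 * (/ x) ^ k + / x * (- INR k * (/ x) ^ S k)) by (rewrite S_INR; simpl; ring).
    apply (is_derive_mult (fun y => / y) (fun y => (/ y) ^ k)); auto.
    + auto_derive; auto; field; auto.
    + intros; apply Rmult_comm.
Qed.

Lemma is_derive_h_div_pow_0 k : is_derive (h_div_pow k) 0 0.
Proof.
  apply is_derive_Reals; intros eps Heps.
  pose proof (INR_fact_lt_0 (S (S k))) as HF; set (F := INR (fact (S (S k)))) in *.
  assert (Hd : 0 < eps / F) by (apply Rdiv_lt_0_compat; auto).
  exists (mkposreal _ Hd); intros y Hy0 Hy; simpl in Hy; unfold h_div_pow.
  rewrite Rplus_0_l, (h_le0 0), Rmult_0_r, Rminus_0_r, Rminus_0_r by lra.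
  destruct (Rle_dec y 0).
  - rewrite h_le0, Rmult_0_r by auto; unfold Rdiv; rewrite Rmult_0_l, Rabs_R0; auto.
  - rewrite h_gt0_eq by lra.
    replace ((/ y) ^ k * exp (- (1 / y)) / y) with ((/ y) ^ S k * exp (- (1 / y)))
      by (simpl; field; lra).
    pose proof (inv_pow_mul_exp_le (S k) y ltac:(lra)) as Hb.
    assert (0 <= (/ y) ^ S k * exp (- (1 / y))).
    { apply Rmult_le_pos; [apply pow_le, Rlt_le, Rinv_0_lt_compat; lra | apply Rlt_le, exp_pos]. }
    rewrite Rabs_right by lra; apply Rabs_def2 in Hy.
    apply Rle_lt_trans with (F * y); auto.
    replace eps with (F * (eps / F)) by (field; lra).
    apply Rmult_lt_compat_l; lra.
Qed.

Lemma is_derive_h_div_pow k x :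
  is_derive (h_div_pow k) x (- INR k * h_div_pow (S k) x + h_div_pow (S (S k)) x).
Proof.
  destruct (Rtotal_order x 0) as [Hx | [-> | Hx]]; unfold h_div_pow.
  - rewrite !h_le0 by lra; replace (- INR k * ((/ x) ^ S k * 0) + (/ x) ^ S (S k) * 0) with 0 by ring.
    apply is_derive_ext_loc with (fun _ => 0); [|apply (is_derive_const 0 x)].
    apply locally_lt with 0; auto; intros y Hy; rewrite h_le0, Rmult_0_r by lra; reflexivity.
  - rewrite !h_le0 by lra; replace (- INR k * ((/ 0) ^ S k * 0) + (/ 0) ^ S (S k) * 0) with 0 by ring.
    apply is_derive_h_div_pow_0.
  - apply is_derive_ext_loc with (fun y => (/ y) ^ k * exp (- (1 / y))).
    + apply locally_gt with 0; auto; intros y Hy; cbv beta; rewrite h_gt0_eq by lra; auto.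
    + rewrite !h_gt0_eq by lra.
      replace (- INR k * ((/ x) ^ S k * exp (- (1 / x))) + (/ x) ^ S (S k) * exp (- (1 / x)))
        with ((- INR k * (/ x) ^ S k) * exp (- (1 / x)) + (/ x) ^ k * (exp (- (1 / x)) * (/ x) ^ 2))
        by (simpl; ring).
      apply (is_derive_mult (fun y => (/ y) ^ k) (fun y => exp (- (1 / y))));
        [apply is_derive_inv_pow; lra | auto_derive; [lra | unfold Rdiv; field; lra]
        | intros; apply Rmult_comm].
Qed.

Lemma Cinf_h : Cinf h.
Proof.
  assert (Hk : forall n k, Cn n (h_div_pow k)).
  { induction n as [|n IH]; intro k; [exact I|]; split.
    - intro x; eexists; apply is_derive_h_div_pow.
    - apply Cn_ext with (fun x => - INR k * h_div_pow (S k) x + h_div_pow (S (S k)) x).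
      + intro x; symmetry; apply is_derive_unique, is_derive_h_div_pow.
      + apply Cn_plus; auto; apply Cn_mult; auto; apply Cn_const. }
  apply Cinf_ext with (h_div_pow 0); [intro x; unfold h_div_pow; simpl; ring | intro n; apply Hk].
Qed.

Lemma h_gt0 x : 0 < x -> 0 < h x.
Proof. intro Hx; rewrite h_gt0_eq by auto; apply exp_pos. Qed.

Lemma h_ge0 x : 0 <= h x.
Proof. destruct (Rle_dec x 0); [rewrite h_le0 by auto; lra | apply Rlt_le, h_gt0; lra]. Qed.

Lemma h_lt_compat x y : 0 <= x -> x < y -> h x < h y.
Proof.
  intros Hx Hxy; destruct (Req_dec x 0) as [->|Hx0]; [rewrite h_le0 by lra; apply h_gt0; lra|].
  rewrite !h_gt0_eq by lra; apply exp_increasing.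
  enough (1 / y < 1 / x) by lra.
  apply Rmult_lt_reg_r with (x * y); [nra | field_simplify; nra].
Qed.

Lemma h_le_compat x y : x <= y -> h x <= h y.
Proof.
  intro Hxy; destruct (Rle_dec x 0); [rewrite (h_le0 x) by auto; apply h_ge0|].
  destruct (Req_dec x y) as [->|]; [lra | apply Rlt_le, h_lt_compat; lra].
Qed.

Lemma s_denom_gt0 x : 0 < h x + h (1 - x).
Proof.
  pose proof (h_ge0 x); pose proof (h_ge0 (1 - x)).
  destruct (Rle_dec x 0); [pose proof (h_gt0 (1 - x)) | pose proof (h_gt0 x)]; lra.
Qed.

Lemma Cinf_s : Cinf s.
Proof.
  apply Cinf_ext with (fun x => h x * / (h x + h (-1 * x + 1))).
  { intro x; unfold s; now replace (-1 * x + 1) with (1 - x) by ring. }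
  apply Cinf_mult; [apply Cinf_h|]; apply Cinf_inv.
  - intro x; replace (-1 * x + 1) with (1 - x) by ring; apply Rgt_not_eq, s_denom_gt0.
  - apply Cinf_plus; [apply Cinf_h | apply Cinf_comp_affine, Cinf_h].
Qed.

Lemma s_le0 x : x <= 0 -> s x = 0.
Proof. intro Hx; unfold s; rewrite h_le0 by auto; unfold Rdiv; ring. Qed.

Lemma s_ge1 x : 1 <= x -> s x = 1.
Proof.
  intro Hx; unfold s; rewrite (h_le0 (1 - x)) by lra.
  pose proof (h_gt0 x); field; lra.
Qed.

Lemma s_lt_compat u v : 0 <= u -> u < v -> v <= 1 -> s u < s v.
Proof.
  intros Hu Huv Hv; unfold s.
  pose proof (s_denom_gt0 u); pose proof (s_denom_gt0 v).
  pose proof (h_lt_compat u v Hu Huv); pose proof (h_lt_compat (1 - v) (1 - u) ltac:(lra) ltac:(lra)).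
  pose proof (h_ge0 u); pose proof (h_ge0 (1 - v)).
  apply Rmult_lt_reg_r with ((h u + h (1 - u)) * (h v + h (1 - v))); [nra|].
  field_simplify; nra.
Qed.

(* [s] is constant outside [[0, 1]], so its derivatives are bounded by their maximum there. *)
Lemma s_derive_n_bounded n : exists M, forall u, Rabs (Derive_n s (S n) u) <= M.
Proof.
  destruct (continuity_ab_maj (fun u => Rabs (Derive_n s (S n) u)) 0 1) as [m [Hm _]]; [lra| |].
  { intros c _; apply continuity_pt_comp with (f2 := Rabs);
      [apply Cinf_continuity_pt, Cinf_s | apply Rcontinuity_abs]. }
  exists (Rabs (Derive_n s (S n) m)); intro u.
  destruct (Rlt_dec u 0) as [Hu|Hu]; [|destruct (Rlt_dec 1 u) as [Hu'|Hu']].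
  - rewrite (Derive_n_ext_loc _ (fun _ => 0)), Derive_n_const, Rabs_R0 by
      (apply locally_lt with 0; auto; intros y Hy; apply s_le0; lra).
    apply Rabs_pos.
  - rewrite (Derive_n_ext_loc _ (fun _ => 1)), Derive_n_const, Rabs_R0 by
      (apply locally_gt with 1; auto; intros y Hy; apply s_ge1; lra).
    apply Rabs_pos.
  - apply Hm; lra.
Qed.

Lemma sAB_affine p1 q1 p2 q2 x :
  sAB p1 q1 p2 q2 x = (q2 - q1) * s (/ (p2 - p1) * x + - p1 / (p2 - p1)) + q1.
Proof. unfold sAB; do 3 f_equal; unfold Rdiv; ring. Qed.

Lemma Cinf_sAB p1 q1 p2 q2 : Cinf (sAB p1 q1 p2 q2).
Proof.
  apply Cinf_ext with (fun x => (q2 - q1) * s (/ (p2 - p1) * x + - p1 / (p2 - p1)) + q1);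
    [intro; symmetry; apply sAB_affine|].
  apply Cinf_plus; [|apply Cinf_const].
  apply Cinf_mult; [apply Cinf_const | apply Cinf_comp_affine, Cinf_s].
Qed.

Lemma sAB_le p1 q1 p2 q2 x : p1 < p2 -> x <= p1 -> sAB p1 q1 p2 q2 x = q1.
Proof.
  intros Hp Hx; unfold sAB; rewrite s_le0; [ring|].
  unfold Rdiv; apply Rmult_le_0_r; [lra | apply Rlt_le, Rinv_0_lt_compat; lra].
Qed.

Lemma sAB_ge p1 q1 p2 q2 x : p1 < p2 -> p2 <= x -> sAB p1 q1 p2 q2 x = q2.
Proof.
  intros Hp Hx; unfold sAB; rewrite s_ge1; [ring|].
  apply Rmult_le_reg_r with (p2 - p1); [lra|]; unfold Rdiv; rewrite Rmult_assoc, Rinv_l; lra.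
Qed.

Lemma sAB_lt_compat p1 q1 p2 q2 x y : p1 < p2 -> q1 < q2 -> p1 <= x -> x < y -> y <= p2 ->
  sAB p1 q1 p2 q2 x < sAB p1 q1 p2 q2 y.
Proof.
  intros Hp Hq Hx Hxy Hy; unfold sAB; apply Rplus_lt_compat_r, Rmult_lt_compat_l; [lra|].
  assert (0 < / (p2 - p1)) by (apply Rinv_0_lt_compat; lra).
  apply s_lt_compat; unfold Rdiv.
  - apply Rmult_le_pos; lra.
  - apply Rmult_lt_compat_r; lra.
  - apply Rmult_le_reg_r with (p2 - p1); [lra|]; rewrite Rmult_assoc, Rinv_l; lra.
Qed.

Lemma sAB_derive_n_bounded n : exists M, 0 <= M /\ forall p1 q1 p2 q2 x, p1 < p2 -> q1 <= q2 ->
  Rabs (Derive_n (sAB p1 q1 p2 q2) (S n) x) <= M * (q2 - q1) * (/ (p2 - p1)) ^ S n.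
Proof.
  destruct (s_derive_n_bounded n) as [M HM].
  exists M; split; [apply Rle_trans with (Rabs (Derive_n s (S n) 0)); [apply Rabs_pos | auto]|].
  intros p1 q1 p2 q2 x Hp Hq.
  rewrite (Derive_n_ext _ _ _ _ (sAB_affine p1 q1 p2 q2)), Derive_n_comp_affine by apply Cinf_s.
  assert (0 < (/ (p2 - p1)) ^ S n) by (apply pow_lt, Rinv_0_lt_compat; lra).
  rewrite !Rabs_mult, (Rabs_right (q2 - q1)), (Rabs_right (_ ^ S n)) by lra.
  replace (M * (q2 - q1) * (/ (p2 - p1)) ^ S n) with ((q2 - q1) * (/ (p2 - p1)) ^ S n * M) by ring.
  apply Rmult_le_compat_l; [apply Rmult_le_pos; lra | apply HM].
Qed.

(** * Rational grids *)

Lemma is_rational_IZR k : is_rational (IZR k).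
Proof. exists k, 1%Z; split; [lia | unfold Rdiv; rewrite Rinv_1; ring]. Qed.

Lemma is_rational_plus x y : is_rational x -> is_rational y -> is_rational (x + y).
Proof.
  intros [a [b [Hb ->]]] [c [d [Hd ->]]].
  exists (a * d + c * b)%Z, (b * d)%Z; split; [lia|].
  rewrite plus_IZR, !mult_IZR; field; split; apply not_0_IZR; auto.
Qed.

Lemma rational_between x y : x < y -> exists r, is_rational r /\ x < r < y.
Proof.
  intro Hxy; destruct (archimed (/ (y - x))) as [Hq _]; set (q := up (/ (y - x))) in *.
  assert (0 < / (y - x)) by (apply Rinv_0_lt_compat; lra).
  destruct (archimed (x * IZR q)) as [Hm1 Hm2]; set (m := up (x * IZR q)) in *.
  assert (1 < (y - x) * IZR q).
  { apply Rmult_lt_compat_l with (r := y - x) in Hq; [|lra]; rewrite Rinv_r in Hq; lra. }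
  exists (IZR m / IZR q); split; [exists m, q; split; [intro E; rewrite E in Hq; lra | auto]|].
  split; apply Rmult_lt_reg_r with (IZR q); try lra; unfold Rdiv; rewrite Rmult_assoc, Rinv_l; lra.
Qed.

Definition incrZ (a : Z -> R) : Prop := forall k, a k < a (k + 1)%Z.

Lemma incrZ_le a : incrZ a -> forall i j, (i <= j)%Z -> a i <= a j.
Proof.
  intros Ha i j Hij; replace j with (i + Z.of_nat (Z.to_nat (j - i)))%Z by lia.
  induction (Z.to_nat (j - i)) as [|n IH]; [rewrite Z.add_0_r; lra|].
  replace (i + Z.of_nat (S n))%Z with (i + Z.of_nat n + 1)%Z by lia.
  specialize (Ha (i + Z.of_nat n)%Z); lra.
Qed.

Lemma incrZ_lt a : incrZ a -> forall i j, (i < j)%Z -> a i < a j.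
Proof.
  intros Ha i j Hij; apply Rlt_le_trans with (a (i + 1)%Z); [apply Ha | apply incrZ_le; auto; lia].
Qed.

Lemma incrZ_segment a x i j : incrZ a -> a i <= x -> x < a j -> exists k, a k <= x < a (k + 1)%Z.
Proof.
  intros Ha Hi Hj.
  assert (Hij : (i < j)%Z) by (apply Z.nle_gt; intro Hji; pose proof (incrZ_le a Ha j i Hji); lra).
  replace j with (i + Z.of_nat (Z.to_nat (j - i)))%Z in Hj by lia.
  revert Hj; generalize (Z.to_nat (j - i)) as n; intros n Hj; clear Hij.
  revert i Hi Hj; induction n as [|n IH]; intros i Hi Hj.
  { replace (i + Z.of_nat 0)%Z with i in Hj by lia; lra. }
  destruct (Rlt_dec x (a (i + 1)%Z)); [exists i; lra|].
  apply (IH (i + 1)%Z); [lra | now replace (i + 1 + Z.of_nat n)%Z with (i + Z.of_nat (S n))%Z by lia].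
Qed.

Definition extendZ (c : nat -> R) (k : Z) : R :=
  if (k <=? 0)%Z then c 0%nat + IZR k else c (Z.to_nat k).

Lemma extendZ_nonpos c k : (k <= 0)%Z -> extendZ c k = c 0%nat + IZR k.
Proof. intro Hk; unfold extendZ; destruct (Z.leb_spec k 0); [auto | lia]. Qed.

Lemma extendZ_of_nat c n : extendZ c (Z.of_nat n) = c n.
Proof.
  unfold extendZ; destruct (Z.leb_spec (Z.of_nat n) 0).
  - replace n with 0%nat by lia; simpl; ring.
  - now rewrite Nat2Z.id.
Qed.

Lemma is_rational_extendZ c : (forall n, is_rational (c n)) -> forall k, is_rational (extendZ c k).
Proof.
  intros Hc k; unfold extendZ; destruct (k <=? 0)%Z; auto.
  apply is_rational_plus; [auto | apply is_rational_IZR].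
Qed.

Lemma incrZ_extendZ c : (forall n, c n < c (S n)) -> incrZ (extendZ c).
Proof.
  intros Hc k; destruct (Z_lt_le_dec k 0).
  - rewrite !extendZ_nonpos, plus_IZR by lia; simpl; lra.
  - replace k with (Z.of_nat (Z.to_nat k)) by lia.
    replace (Z.of_nat (Z.to_nat k) + 1)%Z with (Z.of_nat (S (Z.to_nat k))) by lia.
    rewrite !extendZ_of_nat; auto.
Qed.

Lemma extendZ_segment c L : (forall n, c n < c (S n)) -> (forall x, x < L -> exists n, x < c n) ->
  forall x, x < L -> exists k, extendZ c k <= x < extendZ c (k + 1)%Z.
Proof.
  intros Hc HL x Hx; destruct (HL x Hx) as [n Hn].
  apply incrZ_segment with (Z.min 0 (- up (c 0%nat - x))) (Z.of_nat n);
    [now apply incrZ_extendZ | | now rewrite extendZ_of_nat].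
  destruct (archimed (c 0%nat - x)) as [Hup _].
  rewrite extendZ_nonpos by lia.
  pose proof (IZR_le _ _ (Z.le_min_r 0 (- up (c 0%nat - x)))) as Hmin; rewrite opp_IZR in Hmin; lra.
Qed.

Section RationalGrid.

Variables (L : R) (d : nat -> R).
Hypothesis d_pos : forall n, 0 < d n.
Hypothesis d_S : forall n, d (S n) <= d n / 4.
Hypothesis d_small : forall e, 0 < e -> exists n, d n < e.

Definition rat_approx (n : nat) : R :=
  epsilon (inhabits 0) (fun r => is_rational r /\ L - d n < r < L - d n / 2).

Lemma rat_approx_spec n : is_rational (rat_approx n) /\ L - d n < rat_approx n < L - d n / 2.
Proof. unfold rat_approx; apply epsilon_spec, rational_between; pose proof (d_pos n); lra. Qed.

Lemma rat_approx_gap n : d (S n) < rat_approx (S n) - rat_approx n < d n.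
Proof.
  pose proof (rat_approx_spec n); pose proof (rat_approx_spec (S n)).
  pose proof (d_pos (S n)); pose proof (d_S n); lra.
Qed.

Definition grid : Z -> R := extendZ rat_approx.

Lemma incrZ_grid : incrZ grid.
Proof.
  apply incrZ_extendZ; intro n; pose proof (rat_approx_gap n); pose proof (d_pos (S n)); lra.
Qed.

Lemma grid_of_nat n : grid (Z.of_nat n) = rat_approx n.
Proof. apply extendZ_of_nat. Qed.

Lemma is_rational_grid k : is_rational (grid k).
Proof. apply is_rational_extendZ; intro n; apply rat_approx_spec. Qed.

Lemma grid_lt k : grid k < L.
Proof.
  destruct (Z_lt_le_dec 0 k).
  - replace k with (Z.of_nat (Z.to_nat k)) by lia; rewrite grid_of_nat.
    pose proof (rat_approx_spec (Z.to_nat k)); pose proof (d_pos (Z.to_nat k)); lra.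
  - unfold grid; rewrite extendZ_nonpos by auto.
    pose proof (rat_approx_spec 0); pose proof (d_pos 0); pose proof (IZR_le _ _ l); lra.
Qed.

Lemma grid_segment x : x < L -> exists k, grid k <= x < grid (k + 1)%Z.
Proof.
  apply (extendZ_segment rat_approx L).
  - intro n; pose proof (rat_approx_gap n); pose proof (d_pos (S n)); lra.
  - intros y Hy; destruct (d_small (L - y)) as [n Hn]; [lra|].
    exists n; pose proof (rat_approx_spec n); lra.
Qed.

Lemma grid_segment_large x N : rat_approx N < x -> x < L ->
  exists j, (N <= j)%nat /\ rat_approx j <= x < rat_approx (S j).
Proof.
  intros HN Hx; destruct (grid_segment x Hx) as [k Hk].
  destruct (Z_lt_le_dec k (Z.of_nat N)).
  - pose proof (incrZ_le grid incrZ_grid (k + 1)%Z (Z.of_nat N) ltac:(lia)).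
    rewrite grid_of_nat in *; lra.
  - exists (Z.to_nat k); split; [lia|].
    replace k with (Z.of_nat (Z.to_nat k)) in Hk by lia.
    replace (Z.of_nat (Z.to_nat k) + 1)%Z with (Z.of_nat (S (Z.to_nat k))) in Hk by lia.
    now rewrite !grid_of_nat in Hk.
Qed.

End RationalGrid.

Definition scale (n : nat) : R := (/ 4) ^ n.
Definition fine_scale (n : nat) : R := scale (n * n).

Lemma scale_pos n : 0 < scale n.
Proof. apply pow_lt; lra. Qed.

Lemma scale_add m n : scale (m + n) = scale m * scale n.
Proof. apply pow_add. Qed.

Lemma scale_mul m n : scale (m * n) = scale m ^ n.
Proof. apply pow_mult. Qed.

Lemma scale_S n : scale (S n) = scale n / 4.
Proof. unfold scale; simpl; field. Qed.

Lemma scale_S_le n : scale (S n) <= scale n / 4.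
Proof. rewrite scale_S; lra. Qed.

Lemma scale_le1 n : scale n <= 1.
Proof. induction n as [|n IH]; [unfold scale; simpl; lra | rewrite scale_S; lra]. Qed.

Lemma scale_le m n : (m <= n)%nat -> scale n <= scale m.
Proof.
  intro Hmn; replace n with (m + (n - m))%nat by lia; rewrite scale_add.
  pose proof (scale_pos m); pose proof (scale_le1 (n - m)); nra.
Qed.

Lemma scale_small e : 0 < e -> exists n, scale n < e.
Proof.
  intro He; destruct (pow_lt_1_zero (/ 4) ltac:(rewrite Rabs_right; lra) e He) as [N HN].
  exists N; specialize (HN N (le_n N)); rewrite Rabs_right in HN; auto.
  apply Rle_ge, Rlt_le, scale_pos.
Qed.

Lemma fine_scale_pos n : 0 < fine_scale n.
Proof. apply scale_pos. Qed.

Lemma fine_scale_S n : fine_scale (S n) <= fine_scale n / 4.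
Proof.
  unfold fine_scale; rewrite <- scale_S; apply scale_le; lia.
Qed.

Lemma fine_scale_small e : 0 < e -> exists n, fine_scale n < e.
Proof.
  intro He; destruct (scale_small e He) as [n Hn]; exists n.
  apply Rle_lt_trans with (scale n); auto; apply scale_le; nia.
Qed.

Lemma fine_scale_negligible p C eps : 0 <= C -> 0 < eps -> exists N, forall j, (N <= j)%nat ->
  C * fine_scale j * (/ scale (S j)) ^ p <= eps * scale (S (S j)).
Proof.
  intros HC He; destruct (scale_small (eps / (C + 1))) as [n0 Hn0]; [apply Rdiv_lt_0_compat; lra|].
  exists (p + n0 + 3)%nat; intros j Hj.
  set (r := (j * j - (p * S j + S (S j)) - n0)%nat).
  assert (Hsplit : fine_scale j = scale n0 * scale r * scale (S (S j)) * scale (S j) ^ p).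
  { unfold fine_scale, r; rewrite <- scale_mul, <- !scale_add; f_equal; nia. }
  pose proof (scale_pos (S j)); pose proof (scale_pos (S (S j))); pose proof (scale_pos n0).
  pose proof (scale_pos r); pose proof (scale_le1 r).
  assert (Hinv : scale (S j) ^ p * (/ scale (S j)) ^ p = 1)
    by (rewrite <- Rpow_mult_distr, Rinv_r, pow1; lra).
  assert (HCn0 : C * scale n0 <= eps).
  { apply Rle_trans with ((C + 1) * (eps / (C + 1))); [nra | right; field; lra]. }
  rewrite Hsplit.
  replace (C * (scale n0 * scale r * scale (S (S j)) * scale (S j) ^ p) * (/ scale (S j)) ^ p)
    with (C * scale n0 * scale r * scale (S (S j)) * (scale (S j) ^ p * (/ scale (S j)) ^ p)) by ring.
  rewrite Hinv, Rmult_1_r; apply Rmult_le_compat_r; [lra | nra].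
Qed.

(** * The spline *)

Definition segment_index (a : Z -> R) (x : R) : Z :=
  epsilon (inhabits 0%Z) (fun k => a k <= x < a (k + 1)%Z).

Lemma segment_index_cases a x k : incrZ a -> a k <= x <= a (k + 1)%Z ->
  segment_index a x = k \/ (segment_index a x = (k + 1)%Z /\ x = a (k + 1)%Z).
Proof.
  intros Ha Hk.
  assert (Hex : exists k, a k <= x < a (k + 1)%Z).
  { destruct (Rlt_dec x (a (k + 1)%Z)); [exists k; lra|].
    exists (k + 1)%Z; split; [lra | specialize (Ha (k + 1)%Z); lra]. }
  pose proof (epsilon_spec (inhabits 0%Z) _ Hex) as [Hl Hr]; fold (segment_index a x) in Hl, Hr.
  set (i := segment_index a x) in *.
  destruct (Z.lt_total i k) as [Hik | [Hik | Hik]]; [| now left |].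
  - pose proof (incrZ_le a Ha (i + 1) k ltac:(lia)); lra.
  - destruct (Z.eq_dec i (k + 1)) as [Hi | Hi].
    + right; split; auto; rewrite Hi in Hl; lra.
    + pose proof (incrZ_lt a Ha (k + 1) i ltac:(lia)); lra.
Qed.

Definition ramp (y : R) : R := y * h y.

Lemma ramp_le0 y : y <= 0 -> ramp y = 0.
Proof. intro Hy; unfold ramp; rewrite h_le0 by auto; ring. Qed.

Lemma ramp_ge0 y : 0 <= y -> 0 <= ramp y.
Proof. intro Hy; apply Rmult_le_pos; auto; apply h_ge0. Qed.

Lemma ramp_lt_compat u v : 0 <= u -> u < v -> ramp u < ramp v.
Proof.
  intros Hu Huv; pose proof (h_lt_compat u v Hu Huv); pose proof (h_ge0 u); unfold ramp; nra.
Qed.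

Lemma ramp_ge_third r : 1 <= r -> r / 3 <= ramp r.
Proof.
  intro Hr; unfold ramp; pose proof (h_le_compat 1 r Hr).
  enough (1 / 3 <= h 1) by nra.
  rewrite h_gt0_eq by lra; replace (- (1 / 1)) with (- (1)) by field; rewrite exp_Ropp.
  pose proof exp_le_3; pose proof (exp_pos 1).
  apply Rmult_le_reg_r with (exp 1); auto; unfold Rdiv; rewrite Rmult_assoc, Rinv_l; lra.
Qed.

Lemma Cinf_ramp : Cinf ramp.
Proof. apply Cinf_mult; [apply Cinf_id | apply Cinf_h]. Qed.

Lemma lt_compat_injective (f : R -> R) : (forall x y, x < y -> f x < f y) ->
  forall x y, f x = f y -> x = y.
Proof.
  intros Hf x y Hxy; destruct (Rtotal_order x y) as [Hlt | [Heq | Hlt]]; auto;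
    pose proof (Hf _ _ Hlt); lra.
Qed.

Section Spline.

Variables w z : R.

Definition dom_grid : Z -> R := grid w scale.
Definition cod_grid : Z -> R := grid z fine_scale.

Lemma incrZ_dom_grid : incrZ dom_grid.
Proof. apply incrZ_grid; [apply scale_pos | apply scale_S_le]. Qed.

Lemma incrZ_cod_grid : incrZ cod_grid.
Proof. apply incrZ_grid; [apply fine_scale_pos | apply fine_scale_S]. Qed.

Lemma is_rational_dom_grid k : is_rational (dom_grid k).
Proof. apply is_rational_grid, scale_pos. Qed.

Lemma is_rational_cod_grid k : is_rational (cod_grid k).
Proof. apply is_rational_grid, fine_scale_pos. Qed.

Lemma dom_grid_lt k : dom_grid k < w.
Proof. apply grid_lt, scale_pos. Qed.

Lemma cod_grid_lt k : cod_grid k < z.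
Proof. apply grid_lt, fine_scale_pos. Qed.

Lemma dom_grid_segment x : x < w -> exists k, dom_grid k <= x < dom_grid (k + 1)%Z.
Proof. apply grid_segment; [apply scale_pos | apply scale_S_le | apply scale_small]. Qed.

Lemma cod_grid_segment y : y < z -> exists k, cod_grid k <= y < cod_grid (k + 1)%Z.
Proof. apply grid_segment; [apply fine_scale_pos | apply fine_scale_S | apply fine_scale_small]. Qed.

Definition piece (k : Z) : R -> R :=
  sAB (dom_grid k) (cod_grid k) (dom_grid (k + 1)) (cod_grid (k + 1)).

Definition right_branch (x : R) : R := z + ramp (x - w).

Definition spline (x : R) : R :=
  if Rlt_dec x w then piece (segment_index dom_grid x) x else right_branch x.

Lemma spline_piece x k : x < w -> dom_grid k <= x <= dom_grid (k + 1)%Z -> spline x = piece k x.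
Proof.
  intros Hx Hk; unfold spline; destruct (Rlt_dec x w); [|lra].
  destruct (segment_index_cases _ x k incrZ_dom_grid Hk) as [-> | [-> Hxk]]; auto.
  pose proof (incrZ_dom_grid k); pose proof (incrZ_dom_grid (k + 1)%Z).
  unfold piece; rewrite sAB_le, sAB_ge by lra; auto.
Qed.

Lemma spline_right x : w <= x -> spline x = right_branch x.
Proof. intro Hx; unfold spline; destruct (Rlt_dec x w); [lra | auto]. Qed.

Lemma spline_w : spline w = z.
Proof. rewrite spline_right by lra; unfold right_branch; rewrite ramp_le0; lra. Qed.

Lemma piece_lt_compat k x y : dom_grid k <= x -> x < y -> y <= dom_grid (k + 1)%Z ->
  piece k x < piece k y.
Proof. intros; apply sAB_lt_compat; auto; [apply incrZ_dom_grid | apply incrZ_cod_grid]. Qed.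

Lemma spline_segment x k : x < w -> dom_grid k <= x < dom_grid (k + 1)%Z ->
  cod_grid k <= spline x < cod_grid (k + 1)%Z.
Proof.
  intros Hx Hk; rewrite (spline_piece x k) by lra.
  pose proof (incrZ_dom_grid k).
  assert (Hl : piece k (dom_grid k) = cod_grid k) by (apply sAB_le; lra).
  assert (Hr : piece k (dom_grid (k + 1)%Z) = cod_grid (k + 1)%Z) by (apply sAB_ge; lra).
  split.
  - destruct (Req_dec x (dom_grid k)) as [->|]; [lra|].
    pose proof (piece_lt_compat k (dom_grid k) x); lra.
  - pose proof (piece_lt_compat k x (dom_grid (k + 1)%Z)); lra.
Qed.

Lemma spline_lt_compat x y : x < y -> spline x < spline y.
Proof.
  intro Hxy; destruct (Rlt_dec x w) as [Hx|Hx].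
  - destruct (dom_grid_segment x Hx) as [k Hk]; pose proof (spline_segment x k Hx Hk).
    destruct (Rlt_dec y w) as [Hy|Hy].
    + destruct (dom_grid_segment y Hy) as [m Hm]; pose proof (spline_segment y m Hy Hm).
      destruct (Z.lt_total k m) as [Hkm | [<- | Hkm]].
      * pose proof (incrZ_le _ incrZ_cod_grid (k + 1) m ltac:(lia)); lra.
      * rewrite (spline_piece x k), (spline_piece y k) by lra; apply piece_lt_compat; lra.
      * pose proof (incrZ_le _ incrZ_dom_grid (m + 1) k ltac:(lia)); lra.
    + pose proof (cod_grid_lt (k + 1)); pose proof (ramp_ge0 (y - w) ltac:(lra)).
      rewrite (spline_right y) by lra; unfold right_branch; lra.
  - rewrite !spline_right by lra; unfold right_branch.
    pose proof (ramp_lt_compat (x - w) (y - w) ltac:(lra) ltac:(lra)); lra.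
Qed.

Lemma Cinf_right_branch : Cinf right_branch.
Proof.
  apply Cinf_ext with (fun x => z + ramp (1 * x + - w));
    [intro x; unfold right_branch; do 2 f_equal; ring|].
  apply Cinf_plus; [apply Cinf_const | apply Cinf_comp_affine, Cinf_ramp].
Qed.

Lemma spline_surjective y : exists x, spline x = y.
Proof.
  destruct (Rlt_dec y z) as [Hy|Hy].
  - destruct (cod_grid_segment y Hy) as [k Hk].
    pose proof (incrZ_dom_grid k); pose proof (dom_grid_lt (k + 1)).
    destruct (IVT_cor (fun x => piece k x + - y) (dom_grid k) (dom_grid (k + 1)%Z)) as [x [Hx Hx0]].
    + intro x; apply (Cinf_continuity_pt _ (Cinf_plus _ _ (Cinf_sAB _ _ _ _) (Cinf_const (- y))) 0).
    + lra.
    + unfold piece; rewrite sAB_le, sAB_ge by lra; nra.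
    + exists x; rewrite (spline_piece x k) by lra; lra.
  - set (r := 3 * (y - z) + 1).
    destruct (IVT_cor (fun x => right_branch x + - y) w (w + r)) as [x [Hx Hx0]].
    + intro x; apply (Cinf_continuity_pt _ (Cinf_plus _ _ Cinf_right_branch (Cinf_const (- y))) 0).
    + unfold r; lra.
    + pose proof (ramp_ge_third r ltac:(unfold r; lra)).
      unfold right_branch; replace (w + r - w) with r by ring; rewrite ramp_le0 by lra.
      unfold r in *; nra.
    + exists x; rewrite spline_right by lra; lra.
Qed.

Lemma spline_simF_star x : x < w -> simF_star (spline x) x.
Proof.
  intro Hx; destruct (dom_grid_segment x Hx) as [k Hk].
  apply simF_star_step with x; [red | apply simF_star_refl].
  exists (dom_grid k), (cod_grid k), (dom_grid (k + 1)%Z), (cod_grid (k + 1)%Z).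
  repeat split; try apply is_rational_dom_grid; try apply is_rational_cod_grid;
    try apply incrZ_dom_grid; try apply incrZ_cod_grid.
  right; split; [lra | symmetry; apply spline_piece; lra].
Qed.

(* Near [[dom_grid k, dom_grid (k + 1))] the left piece has already reached its top value
   [cod_grid k] and the right summand is still [0] before [dom_grid k]. *)
Definition local_model (k : Z) (u : R) : R :=
  piece (k - 1) u + sAB (dom_grid k) 0 (dom_grid (k + 1)) (cod_grid (k + 1) - cod_grid k) u.

Lemma Cinf_local_model k : Cinf (local_model k).
Proof. apply Cinf_plus; apply Cinf_sAB. Qed.

Lemma spline_locally_local_model x k : x < w -> dom_grid k <= x < dom_grid (k + 1)%Z ->
  locally x (fun u => spline u = local_model k u).
Proof.
  intros Hx Hk.
  assert (Hk1 : dom_grid (k - 1)%Z < dom_grid k)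
    by (replace k with (k - 1 + 1)%Z at 2 by lia; apply incrZ_dom_grid).
  pose proof (incrZ_dom_grid k); pose proof (dom_grid_lt (k + 1)).
  apply locally_interval with (dom_grid (k - 1)%Z) (dom_grid (k + 1)%Z); simpl; try lra.
  intros u Hu1 Hu2; unfold local_model, piece; replace (k - 1 + 1)%Z with k by lia.
  destruct (Rle_dec u (dom_grid k)).
  - rewrite (spline_piece u (k - 1)) by (replace (k - 1 + 1)%Z with k by lia; lra).
    unfold piece; replace (k - 1 + 1)%Z with k by lia; rewrite (sAB_le (dom_grid k)) by lra; ring.
  - rewrite (spline_piece u k), (sAB_ge (dom_grid (k - 1)%Z)) by lra; unfold piece, sAB; ring.
Qed.

Lemma spline_locally_right x : w < x -> locally x (fun u => spline u = right_branch u).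
Proof.
  intro Hx; apply locally_gt with w; auto; intros u Hu; apply spline_right; lra.
Qed.

Lemma piece_of_nat n : piece (Z.of_nat n) =
  sAB (rat_approx w scale n) (rat_approx z fine_scale n)
      (rat_approx w scale (S n)) (rat_approx z fine_scale (S n)).
Proof.
  unfold piece, dom_grid, cod_grid; replace (Z.of_nat n + 1)%Z with (Z.of_nat (S n)) by lia.
  now rewrite !grid_of_nat.
Qed.

Lemma sAB_rat_approx_derive_n_small p eps : 0 < eps -> exists N, forall j q1 q2 y, (N <= j)%nat ->
  q1 <= q2 <= q1 + fine_scale j ->
  Rabs (Derive_n (sAB (rat_approx w scale j) q1 (rat_approx w scale (S j)) q2) (S p) y)
    <= eps * scale (S (S j)).
Proof.
  intro He; destruct (sAB_derive_n_bounded p) as [M [HM0 HM]].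
  destruct (fine_scale_negligible (S p) M eps HM0 He) as [N HN]; exists N.
  intros j q1 q2 y Hj Hq.
  pose proof (rat_approx_gap w scale scale_pos scale_S_le j) as Hgap; pose proof (scale_pos (S j)).
  eapply Rle_trans; [apply HM; lra|]; eapply Rle_trans; [|apply (HN j Hj)].
  set (gap := rat_approx w scale (S j) - rat_approx w scale j) in *.
  assert (Hinv : 0 <= / gap <= / scale (S j))
    by (split; [apply Rlt_le, Rinv_0_lt_compat | apply Rinv_le_contravar]; lra).
  pose proof (pow_incr _ _ (S p) Hinv); pose proof (pow_le _ (S p) (proj1 Hinv)).
  apply Rmult_le_compat; nra.
Qed.

Lemma spline_rat_approx_segment y j :
  y < w -> rat_approx w scale j <= y < rat_approx w scale (S j) ->
  rat_approx z fine_scale j <= spline y < rat_approx z fine_scale (S j).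
Proof.
  intros Hy Hj; pose proof (spline_segment y (Z.of_nat j) Hy) as Hs.
  unfold dom_grid, cod_grid in Hs; replace (Z.of_nat j + 1)%Z with (Z.of_nat (S j)) in Hs by lia.
  rewrite !grid_of_nat in Hs; auto.
Qed.

Lemma spline_left_close eps : 0 < eps -> exists d, 0 < d /\
  forall y, w - d < y < w -> Rabs (spline y - z) <= eps * (w - y).
Proof.
  intro He; destruct (fine_scale_negligible 0 2 eps ltac:(lra) He) as [N HN].
  pose proof (rat_approx_spec w scale scale_pos N); pose proof (scale_pos N).
  exists (w - rat_approx w scale N); split; [lra|]; intros y Hy.
  destruct (grid_segment_large w scale scale_pos scale_S_le scale_small y N ltac:(lra) ltac:(lra))
    as [j [Hj Hyj]].
  pose proof (spline_rat_approx_segment y j ltac:(lra) Hyj).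
  pose proof (rat_approx_spec z fine_scale fine_scale_pos j).
  pose proof (rat_approx_spec z fine_scale fine_scale_pos (S j)).
  pose proof (rat_approx_spec w scale scale_pos (S j)).
  pose proof (HN j Hj) as HNj; rewrite pow_O, Rmult_1_r in HNj.
  pose proof (scale_le (S j) (S (S j)) ltac:(lia)); pose proof (scale_pos (S (S j))).
  rewrite Rabs_left1 by lra; nra.
Qed.

Lemma spline_left_flat p eps : 0 < eps -> exists d, 0 < d /\
  forall y, w - d < y < w -> Rabs (Derive_n spline (S p) y) <= eps * (w - y).
Proof.
  intro He; destruct (sAB_rat_approx_derive_n_small p (eps / 4) ltac:(lra)) as [N HN].
  pose proof (rat_approx_spec w scale scale_pos (S N)); pose proof (scale_pos (S N)).
  exists (w - rat_approx w scale (S N)); split; [lra|]; intros y Hy.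
  destruct (grid_segment_large w scale scale_pos scale_S_le scale_small y (S N) ltac:(lra) ltac:(lra))
    as [[|n] [Hn Hyn]]; [lia|].
  assert (Hk : dom_grid (Z.of_nat (S n)) <= y < dom_grid (Z.of_nat (S n) + 1)%Z).
  { unfold dom_grid; replace (Z.of_nat (S n) + 1)%Z with (Z.of_nat (S (S n))) by lia.
    now rewrite !grid_of_nat. }
  rewrite (Derive_n_ext_loc _ _ _ _ (spline_locally_local_model y _ ltac:(lra) Hk)).
  unfold local_model; rewrite Derive_n_plus_Cinf by apply Cinf_sAB.
  replace (Z.of_nat (S n) - 1)%Z with (Z.of_nat n) by lia; rewrite piece_of_nat.
  unfold dom_grid, cod_grid; replace (Z.of_nat (S n) + 1)%Z with (Z.of_nat (S (S n))) by lia.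
  rewrite !grid_of_nat.
  pose proof (rat_approx_gap z fine_scale fine_scale_pos fine_scale_S n).
  pose proof (rat_approx_gap z fine_scale fine_scale_pos fine_scale_S (S n)).
  pose proof (fine_scale_pos (S n)); pose proof (fine_scale_pos (S (S n))).
  pose proof (HN n (rat_approx z fine_scale n) (rat_approx z fine_scale (S n)) y
                 ltac:(lia) ltac:(lra)).
  pose proof (HN (S n) 0 (rat_approx z fine_scale (S (S n)) - rat_approx z fine_scale (S n)) y
                 ltac:(lia) ltac:(lra)).
  pose proof (rat_approx_spec w scale scale_pos (S (S n))).
  pose proof (scale_le (S (S n)) (S (S (S n))) ltac:(lia)).
  eapply Rle_trans; [apply Rabs_triang | nra].
Qed.

Lemma smooth_spline : smooth spline.
Proof.
  assert (Hflat : forall p, Derive_n right_branch (S p) w = 0).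
  { apply Cinf_const_left_derive_n with z; [apply Cinf_right_branch|].
    intros u Hu; unfold right_branch; rewrite ramp_le0 by lra; ring. }
  assert (Hglue : forall p, Derive_n spline p w = Derive_n right_branch p w /\
                            is_derive (Derive_n spline p) w 0).
  { apply Derive_n_glue; [apply Cinf_right_branch | apply spline_right | apply Hflat|].
    intros [|p] eps He.
    - replace (Derive_n right_branch 0 w) with z
        by (rewrite <- spline_w; apply spline_right; lra).
      apply spline_left_close, He.
    - rewrite Hflat; setoid_rewrite Rminus_0_r; apply spline_left_flat, He. }
  exists (Derive_n spline); split; [reflexivity|]; intros n x; apply is_derive_Reals.
  destruct (Rtotal_order x w) as [Hx | [-> | Hx]].
  - destruct (dom_grid_segment x Hx) as [k Hk].
    apply Cinf_locally_is_derive_n with (local_model k); [apply Cinf_local_model|].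
    apply spline_locally_local_model; auto.
  - destruct (Hglue (S n)) as [Hv _]; rewrite Hv, Hflat; apply Hglue.
  - apply Cinf_locally_is_derive_n with right_branch; [apply Cinf_right_branch|].
    apply spline_locally_right; auto.
Qed.

End Spline.

Theorem mainTheorem8 : forall w z : R,
  exists t : R -> R,
    smooth t /\
    (forall x y : R, x < y -> t x < t y) /\
    (forall x y : R, t x = t y -> x = y) /\
    (forall y : R, exists x : R, t x = y) /\
    t w = z /\
    (forall x : R, x < w -> simF_star (t x) x).
Proof.
  intros w z; exists (spline w z); repeat split.
  - apply smooth_spline.
  - apply spline_lt_compat.
  - apply lt_compat_injective, spline_lt_compat.
  - apply spline_surjective.
  - apply spline_w.
  - apply spline_simF_star.
Qed.
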